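(* For every even integer $k\ge 0$ and every integer $d\ge k$, every $d$-regular graph contains a spanning subgraph in which every vertex has degree $k$ or $k-1$.
   Context: All graphs are finite and simple. A spanning subgraph of $H=(V,E)$ is a graph $(V,E')$ with $E'\subseteq E$. *)

From mathcomp Require Import all_boot.
Set Implicit Arguments. Unset Strict Implicit. Unset Printing Implicit Defensive.

Definition simple_graph (T : finType) (e : rel T) : Prop :=
  symmetric e /\ irreflexive e.

Definition deg (T : finType) (e : rel T) (x : T) : nat := #|[set y | e x y]|.

Definition regular (T : finType) (e : rel T) (d : nat) : Prop :=
  forall x, deg e x = d.

Definition spanning_subgraph (T : finType) (e' e : rel T) : Prop :=
  simple_graph e' /\ subrel e' e.

From mathcomp Require Import all_boot zify.
Set Implicit Arguments. Unset Strict Implicit. Unset Printing Implicit Defensive.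

(* The proof goes through orientations.  We first prove (the sufficiency part
   of) Hakimi's theorem: if every vertex set S spans at most \sum_(x in S) b x
   edges, the graph has an orientation with out-degrees bounded by b; an
   orientation violating a bound is improved by reversing a directed path from
   an overloaded vertex to an unsaturated one.  Two applications follow:
   a 2r-regular graph has a balanced orientation (in- and out-degrees r), and
   an r-regular bipartite graph has a j-regular spanning subgraph for j <= r.
   Together they give Petersen's theorem: a 2r-regular graph has a 2j-factor
   for every j <= r.  For d even this is the claim with k = 2j.  For d odd we
   apply it to the (d+1)-regular prism over the graph (two copies joined by a
   perfect matching) and restrict the k-factor to one copy: each vertex loses
   at most its matching edge. *)

Section Counting.
Variable V : finType.

Lemma card_setU_disjoint (A B : {set V}) :
  [disjoint A & B] -> #|A :|: B| = #|A| + #|B|.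
Proof. by move=> dAB; apply/eqP; rewrite (leq_card_setU A B). Qed.

Lemma card_sep_sum (S : {set V}) (P : pred V) :
  #|[set y in S | P y]| = \sum_(y in S) P y.
Proof.
rewrite -sum1_card big_mkcond [RHS]big_mkcond /=; apply: eq_bigr => y _.
by rewrite inE; case: (y \in S); case: (P y).
Qed.

Lemma eq_from_sum_le (I : finType) (f g : I -> nat) :
  (forall i, f i <= g i) -> \sum_i f i = \sum_i g i -> forall i, f i = g i.
Proof.
move=> le_fg sum_eq i; apply/eqP.
have := (leqif_sum (fun i (_ : true) => leqif_eq (le_fg i))).2.
by rewrite sum_eq eqxx => /esym/forall_inP; apply.
Qed.

Lemma card_side (P : pred (V * bool)) (c : bool) :
  (forall q, P q -> q.2 = c) -> #|[set q | P q]| = #|[set y | P (y, c)]|.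
Proof.
move=> Pc; have inj : injective (fun y : V => (y, c)) by move=> y1 y2 [].
rewrite -(card_imset _ inj); apply: eq_card => -[y c']; rewrite inE.
apply/idP/imsetP => [Pq|[z]]; last by rewrite inE => Pz [-> ->].
by move: (Pc _ Pq) (Pq) => /= -> Pyc; exists y; rewrite ?inE.
Qed.

Lemma sum_pair (f : V * bool -> nat) :
  \sum_p f p = \sum_x (f (x, true) + f (x, false)).
Proof.
rewrite [RHS](eq_bigr (fun x => \sum_c f (x, c))); last by move=> x _; rewrite big_bool.
by rewrite pair_big; apply: eq_big => // -[x c].
Qed.

End Counting.

Section Orientations.
Variable V : finType.

(* For a relation O read as a directed graph, deg O x is the out-degree of x;
   indeg O y is the in-degree of y. *)
Definition indeg (O : rel V) (y : V) : nat := #|[set x | O x y]|.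

Definition orientation (E O : rel V) : Prop :=
  (forall x y, E x y = O x y || O y x) /\ (forall x y, O x y -> ~~ O y x).

Lemma orientation_exists (E : rel V) :
  symmetric E -> irreflexive E -> exists O, orientation E O.
Proof.
move=> Esym Eirr; exists (fun x y => E x y && (enum_rank x < enum_rank y)); split.
  move=> x y /=; rewrite [E y x]Esym -andb_orr; case Exy: (E x y) => //=.
  case: ltngtP => // /val_inj /enum_rank_inj exy.
  by move: Exy; rewrite exy Eirr.
by move=> x y /= /andP[_ lt_xy]; rewrite negb_and ltnNge ltnW ?orbT.
Qed.

Lemma deg_orientation (E O : rel V) (x : V) :
  orientation E O -> deg E x = deg O x + indeg O x.
Proof.
move=> [EO Oasym]; rewrite /deg /indeg -card_setU_disjoint.
  by apply: eq_card => y; rewrite !inE EO.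
apply/pred0P => y /=; rewrite !inE; apply/negbTE/andP => -[Oxy Oyx].
by move: (Oasym _ _ Oxy); rewrite Oyx.
Qed.

(* Handshake lemma inside S: every edge of E within S is counted twice on
   the left and once, at its tail, on the right. *)
Lemma orientation_handshake (E O : rel V) (S : {set V}) :
  orientation E O ->
  \sum_(x in S) #|[set y in S | E x y]| = 2 * \sum_(x in S) #|[set y in S | O x y]|.
Proof.
move=> [EO Oasym].
rewrite (eq_bigr (fun x => \sum_(y in S) O x y + \sum_(y in S) O y x)); last first.
  move=> x _; rewrite card_sep_sum -big_split /=; apply: eq_bigr => y _.
  rewrite EO; case Oxy: (O x y); case Oyx: (O y x) => //.
  by move: (Oasym _ _ Oxy); rewrite Oyx.
rewrite big_split /= [X in _ + X]exchange_big /= mul2n -addnn.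
by congr (_ + _); apply: eq_bigr => x _; rewrite card_sep_sum.
Qed.

Lemma orientation_handshakeT (E O : rel V) :
  orientation E O -> \sum_x deg E x = 2 * \sum_x deg O x.
Proof.
move=> EO; have := orientation_handshake setT EO.
have degT (R : rel V) x : #|[set y in setT | R x y]| = deg R x.
  by apply: eq_card => y; rewrite !inE.
under eq_bigr do rewrite degT; under [X in _ = 2 * X]eq_bigr do rewrite degT.
by rewrite !(eq_bigl _ _ (in_setT (T := V))).
Qed.

Definition reverse (O F : rel V) : rel V := fun x y => (O x y && ~~ F x y) || F y x.

Lemma reverse_orientation (E O F : rel V) :
  orientation E O -> subrel F O -> orientation E (reverse O F).
Proof.
move=> [EO Oasym] FO; split=> x y; rewrite /reverse; [rewrite EO|];
  move: (FO x y) (FO y x) (Oasym x y) (Oasym y x);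
  case: (O x y); case: (O y x); case: (F x y); case: (F y x) => //= H1 H2 H3 H4;
  by [ | move: (H1 isT) | move: (H2 isT) | move: (H3 isT) | move: (H4 isT)].
Qed.

Lemma deg_reverse (E O F : rel V) (u : V) :
  orientation E O -> subrel F O ->
  deg (reverse O F) u = deg O u - deg F u + indeg F u.
Proof.
move=> [_ Oasym] FO; have FuO : [set y | F u y] \subset [set y | O u y].
  by apply/subsetP => y; rewrite !inE; apply: FO.
rewrite /deg /indeg -(setIidPr FuO) -cardsD -card_setU_disjoint.
  by apply: eq_card => y; rewrite !inE /reverse andbC.
apply/pred0P => y /=; rewrite !inE; apply/negbTE/andP => -[/andP[_ Ouy] Fyu].
by move: (Oasym _ _ (FO _ _ Fyu)); rewrite Ouy.
Qed.

Definition arc (a b : V) : rel V := fun x y => (x == a) && (y == b).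

Lemma deg_arc (a b u : V) : deg (arc a b) u = (u == a).
Proof.
rewrite /deg /arc; case: eqP => [_|_] /=; last by apply: eq_card0 => y; rewrite !inE.
by rewrite -(cards1 b); apply: eq_card => y; rewrite !inE.
Qed.

Lemma indeg_arc (a b u : V) : indeg (arc a b) u = (u == b).
Proof.
rewrite /indeg /arc; case: (eqVneq u b) => [_|_] /=.
  by rewrite -(cards1 a); apply: eq_card => x; rewrite !inE andbT.
by apply: eq_card0 => x; rewrite !inE andbF.
Qed.

Lemma reverse_path (E O : rel V) (v : V) (p : seq V) :
  orientation E O -> path O v p -> uniq (v :: p) -> p != [::] ->
  exists O', orientation E O' /\
    forall u, deg O' u = deg O u - (u == v) + (u == last v p).
Proof.
elim: p O v => [//|x p IH] O v EO /andP[Ovx path_xp] uniq_vxp _.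
pose O1 := reverse O (arc v x).
have arcO : subrel (arc v x) O by move=> a b /andP[/eqP-> /eqP->].
have EO1 := reverse_orientation EO arcO.
have degO1 u : deg O1 u = deg O u - (u == v) + (u == x).
  by rewrite (deg_reverse _ EO arcO) deg_arc indeg_arc.
case: p IH path_xp uniq_vxp => [|y p] IH path_xp uniq_vxp; first by exists O1.
have path1 : path O1 x (y :: p).
  apply: (@sub_in_path _ (predC1 v) O); last exact: path_xp.
    by move=> a b /= a_v _ Oab; rewrite /O1 /reverse /arc (negbTE a_v) Oab.
  move: uniq_vxp => /andP[v_notin _]; apply/allP => a a_in /=.
  by apply: contraNneq v_notin => <-.
have [O' [EO' degO']] := IH O1 x EO1 path1 (proj2 (andP uniq_vxp)) isT.
by exists O'; split=> // u; rewrite degO' degO1 addnK.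
Qed.

Lemma reverse_connect (E O : rel V) (v w : V) :
  orientation E O -> connect O v w -> v != w ->
  exists O', orientation E O' /\
    forall u, deg O' u = deg O u - (u == v) + (u == w).
Proof.
move=> EO /connectP[p0 path_p0 ->]; case/shortenP: path_p0 => p path_p uniq_p _ vw.
apply: (reverse_path EO path_p uniq_p).
by apply: contraNneq vw => p_nil; rewrite p_nil /= eqxx.
Qed.

Definition excess (O : rel V) (b : V -> nat) : nat := \sum_u (deg O u - b u).

(* Hakimi's condition: every vertex set S spans at most \sum_(x in S) b x
   edges (the left-hand side counts every edge of S twice). *)
Definition hakimi_condition (E : rel V) (b : V -> nat) : Prop :=
  forall S : {set V},
    \sum_(x in S) #|[set y in S | E x y]| <= 2 * \sum_(x in S) b x.

(* If v exceeds its bound, the vertices reachable from v cannot all be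
   saturated: by the handshake lemma they would span too many edges.  Reversing
   a path from v to an unsaturated reachable w strictly decreases the excess. *)
Lemma excess_decrease (E O : rel V) (b : V -> nat) (v : V) :
  hakimi_condition E b -> orientation E O -> b v < deg O v ->
  exists O', orientation E O' /\ excess O' b < excess O b.
Proof.
move=> hakimi_cond EO bv.
set R := [set u | connect O v u].
have Rv : v \in R by rewrite inE connect0.
have [w Rw deficit_w] : exists2 w, w \in R & deg O w < b w.
  apply/exists_inP; apply: contraT; rewrite negb_exists_in => /forall_inP surplus.
  have degR x : x \in R -> #|[set y in R | O x y]| = deg O x.
    rewrite inE => vx; apply: eq_card => y; rewrite !inE andb_idl // => Oxy.
    exact: connect_trans vx (connect1 Oxy).
  have := hakimi_cond R; rewrite (orientation_handshake R EO) leq_pmul2l //.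
  rewrite (eq_bigr _ degR) => /leq_gtF <-.
  rewrite (bigD1 v) //= [X in _ < X](bigD1 v) //= -addSn leq_add //.
  by apply: leq_sum => x /andP[xR _]; rewrite leqNgt; apply: surplus.
have vw : v != w by apply: contraTneq bv => ->; rewrite -leqNgt ltnW.
have cvw : connect O v w by rewrite inE in Rw.
have [O' [EO' degO']] := reverse_connect EO cvw vw.
exists O'; split=> //.
rewrite /excess (bigD1 v) //= [X in _ < X](bigD1 v) //= -addSn leq_add //.
  by rewrite degO' eqxx (negbTE vw); lia.
apply: leq_sum => u uv; rewrite degO' (negbTE uv).
by case: (eqVneq u w) => [->|_]; lia.
Qed.

Theorem hakimi (E : rel V) (b : V -> nat) :
  symmetric E -> irreflexive E -> hakimi_condition E b ->
  exists O, orientation E O /\ forall v, deg O v <= b v.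
Proof.
move=> Esym Eirr hakimi_cond; have [O EO] := orientation_exists Esym Eirr.
have [n] := ubnP (excess O b); elim: n O EO => // n IH O EO excessO.
case: (boolP [forall v, deg O v <= b v]) => [/forallP|/forallPn[v]]; first by exists O.
rewrite -ltnNge => bv; have [O' [EO' lt_excess]] := excess_decrease hakimi_cond EO bv.
by apply: (IH O') => //; apply: leq_trans lt_excess _.
Qed.

End Orientations.

Section RegularBipartite.
Variable V : finType.

(* A relation R on V, seen as a bipartite graph between a left copy
   V * {true} and a right copy V * {false}: left_right R orients it from left
   to right, bipartite R is the underlying simple graph. *)
Definition left_right (R : rel V) : rel (V * bool) :=
  fun p q => [&& p.2, ~~ q.2 & R p.1 q.1].

Definition bipartite (R : rel V) : rel (V * bool) :=
  fun p q => left_right R p q || left_right R q p.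

Lemma bipartite_simple (R : rel V) : simple_graph (bipartite R).
Proof.
split=> [p q|p]; first by rewrite /bipartite orbC.
by case: p => x c; rewrite /bipartite /left_right orbb; case: c.
Qed.

Lemma bipartite_sides (R : rel V) (p q : V * bool) :
  bipartite R p q -> p.2 = ~~ q.2.
Proof. by rewrite /bipartite /left_right; case: p.2; case: q.2; rewrite ?andbF. Qed.

Lemma left_right_orientation (R : rel V) :
  orientation (bipartite R) (left_right R).
Proof. by split=> // p q /and3P[p2 _ _]; rewrite /left_right p2 andbF. Qed.

Lemma deg_left_right (R : rel V) (x : V) (c : bool) :
  deg (left_right R) (x, c) = if c then deg R x else 0.
Proof.
rewrite /deg (@card_side _ _ false); last by move=> q /and3P[_ /negbTE].
by case: c => //; apply: eq_card0 => y; rewrite !inE.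
Qed.

Lemma indeg_left_right (R : rel V) (y : V) (c : bool) :
  indeg (left_right R) (y, c) = if c then 0 else indeg R y.
Proof.
rewrite /indeg (@card_side _ _ true); last by move=> p /and3P[].
by case: c => //; apply: eq_card0 => x; rewrite !inE.
Qed.

(* If R is r-biregular, the bipartite graph satisfies Hakimi's condition for
   the bounds j on the left and r - j on the right: the edges within S number
   at most r times the number of left vertices of S, and at most r times the
   number of right vertices of S. *)
Lemma bipartite_hakimi_condition (R : rel V) (r j : nat) :
  (forall x, deg R x = r) -> (forall y, indeg R y = r) -> j <= r ->
  hakimi_condition (bipartite R) (fun p => if p.2 then j else r - j).
Proof.
move=> degR indegR jr S.
rewrite (orientation_handshake S (left_right_orientation R)) leq_pmul2l //.
set X := \sum_(p in S) _.
have X_left : X <= r * \sum_(p in S) p.2.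
  rewrite big_distrr; apply: leq_sum => -[x c] _ /=.
  apply: leq_trans (_ : deg (left_right R) (x, c) <= _).
    by apply: subset_leq_card; apply/subsetP => q; rewrite !inE => /andP[].
  by rewrite deg_left_right; case: c; rewrite ?degR ?muln1.
have X_right : X <= r * \sum_(q in S) ~~ q.2.
  rewrite /X (eq_bigr _ (fun p _ => card_sep_sum _ _)) exchange_big big_distrr.
  apply: leq_sum => -[y c] _ /=; rewrite -card_sep_sum.
  apply: leq_trans (_ : indeg (left_right R) (y, c) <= _).
    by apply: subset_leq_card; apply/subsetP => p; rewrite !inE => /andP[].
  by rewrite indeg_left_right; case: c; rewrite ?indegR ?muln1.
rewrite (eq_bigr (fun p : V * bool => j * p.2 + (r - j) * ~~ p.2)); last first.
  by move=> [x []] _ /=; rewrite ?muln1 ?muln0 ?addn0.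
rewrite big_split -!big_distrr /=.
set L := \sum_(p in S) _ in X_left *; set Rt := \sum_(q in S) _ in X_right *.
case: (leqP L Rt) => [le_LR|/ltnW le_RL].
  by apply: leq_trans X_left _; rewrite -{1}(subnKC jr) mulnDl leq_add2l leq_mul.
by apply: leq_trans X_right _; rewrite -{1}(subnKC jr) mulnDl leq_add2r leq_mul.
Qed.

(* An orientation of bipartite R within the bounds above must meet them with
   equality (the bounds add up to the number of edges); its left-to-right arcs
   form the subgraph, with out-degree j and in-degree r - (r - j) = j. *)
Theorem regular_bipartite_factor (R : rel V) (r j : nat) :
  (forall x, deg R x = r) -> (forall y, indeg R y = r) -> j <= r ->
  exists R' : rel V, subrel R' R /\
    (forall x, deg R' x = j) /\ (forall y, indeg R' y = j).
Proof.
move=> degR indegR jr; pose b (p : V * bool) := if p.2 then j else r - j.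
have [Bsym Birr] := bipartite_simple R.
have [O [EO Ob]] := hakimi Bsym Birr (bipartite_hakimi_condition degR indegR jr).
have degB p : deg (bipartite R) p = r.
  case: p => x c; rewrite (deg_orientation _ (left_right_orientation R)).
  by rewrite deg_left_right indeg_left_right; case: c; rewrite ?degR ?indegR ?addn0.
have degO : forall p, deg O p = b p.
  apply: eq_from_sum_le Ob _; apply/eqP.
  rewrite -(eqn_pmul2l (_ : 0 < 2)) // -(orientation_handshakeT EO) !sum_pair.
  rewrite big_distrr; apply/eqP/eq_bigr => x _; rewrite !degB /b /= subnKC //.
  by rewrite mul2n addnn.
have [EB _] := EO.
have sides p q : O p q -> p.2 = ~~ q.2.
  by move=> Opq; apply: (@bipartite_sides R); rewrite EB Opq.
exists (fun x y => O (x, true) (y, false)); split; [|split].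
- move=> x y Oxy; have : bipartite R (x, true) (y, false) by rewrite EB Oxy.
  by rewrite /bipartite /left_right /= orbF.
- move=> x; rewrite /deg -(@card_side _ (fun q => O (x, true) q) false); first exact: degO.
  by move=> q /sides /esym /negbRL.
- move=> y; rewrite /indeg -(@card_side _ (fun p => O p (y, false)) true); last first.
    by move=> p /sides.
  by have := deg_orientation (y, false) EO; rewrite degB degO /b /indeg /=; lia.
Qed.

End RegularBipartite.

Section EvenFactors.
Variable V : finType.

Lemma balanced_orientation (E : rel V) (r : nat) :
  simple_graph E -> regular E r.*2 ->
  exists O, orientation E O /\ (forall x, deg O x = r) /\ (forall x, indeg O x = r).
Proof.
move=> [Esym Eirr] Ereg.
have [O [EO Or]] : exists O, orientation E O /\ forall x, deg O x <= r.
  apply: (hakimi (b := fun _ => r)) => // S; rewrite big_distrr /=.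
  apply: leq_sum => x _; rewrite mul2n -(Ereg x).
  by apply: subset_leq_card; apply/subsetP => y; rewrite !inE => /andP[].
have degO : forall x, deg O x = r.
  apply: (eq_from_sum_le (g := fun _ => r)) => //; apply/eqP.
  rewrite -(eqn_pmul2l (_ : 0 < 2)) // -(orientation_handshakeT EO) big_distrr.
  by apply/eqP/eq_bigr => x _; rewrite Ereg /= mul2n.
exists O; split=> //; split=> // x.
by have := deg_orientation x EO; rewrite Ereg degO -addnn => /addnI.
Qed.

(* Orient it in a balanced way, read the orientation as an r-regular bipartite
   graph, extract a j-regular part R and forget the directions of R. *)
Theorem petersen (E : rel V) (r j : nat) :
  simple_graph E -> regular E r.*2 -> j <= r ->
  exists H, spanning_subgraph H E /\ regular H j.*2.
Proof.
move=> Esimple Ereg jr.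
have [O [EO [degO indegO]]] := balanced_orientation Esimple Ereg.
have [R [RO [degR indegR]]] := regular_bipartite_factor degO indegO jr.
have [EOsym Oasym] := EO.
pose H x y := R x y || R y x.
have HR : orientation H R.
  by split=> // x y Rxy; apply: contraTN (Oasym _ _ (RO _ _ Rxy)) => /RO ->.
exists H; split; last by move=> x; rewrite (deg_orientation x HR) degR indegR addnn.
split; first split.
- by move=> x y; rewrite /H orbC.
- by move=> x; apply/negbTE/negP; rewrite /H orbb => /RO Oxx; have := Oasym _ _ Oxx; rewrite Oxx.
- by move=> x y /orP[] /RO O_xy; rewrite EOsym O_xy ?orbT.
Qed.

End EvenFactors.

Section Prism.
Variable T : finType.

Definition prism (e : rel T) : rel (T * bool) :=
  fun p q => ((p.2 == q.2) && e p.1 q.1) || ((p.1 == q.1) && (p.2 != q.2)).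

Lemma prism_simple (e : rel T) : simple_graph e -> simple_graph (prism e).
Proof.
move=> [esym eirr]; split=> [[x a] [y c]|[x a]]; rewrite /prism /=.
  by rewrite [c == a]eq_sym [y == x]eq_sym esym.
by rewrite !eqxx eirr.
Qed.

Lemma prism_regular (e : rel T) (d : nat) :
  simple_graph e -> regular e d -> regular (prism e) d.+1.
Proof.
move=> [_ eirr] ereg [x a]; rewrite /deg.
have -> : [set q | prism e (x, a) q] =
          [set q | (q.2 == a) && e x q.1] :|: [set (x, ~~ a)].
  apply/setP => -[y c]; rewrite !inE xpair_eqE /prism /=.
  case: (eqVneq x y) => [<-|xy]; first by rewrite eirr; case: a; case: c.
  by case: a; case: c; rewrite /= ?andbF ?orbF // eq_sym (negbTE xy).
rewrite card_setU_disjoint; last first.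
  by rewrite disjoint_sym disjoints1 inE /= eirr andbF.
rewrite cards1 addn1 (@card_side _ (fun q => (q.2 == a) && e x q.1) a).
  by rewrite -(ereg x) /deg; congr (_.+1); apply: eq_card => y; rewrite !inE eqxx.
by move=> q /andP[/eqP].
Qed.

Definition top_copy (H : rel (T * bool)) : rel T := fun x y => H (x, true) (y, true).

Lemma top_copy_spanning (e : rel T) (H : rel (T * bool)) :
  spanning_subgraph H (prism e) -> spanning_subgraph (top_copy H) e.
Proof.
move=> [[Hsym Hirr] He]; split; first by split=> [x y|x]; [apply: Hsym | apply: Hirr].
by move=> x y /He; rewrite /prism /= andbF orbF.
Qed.

Lemma deg_prism_top (e : rel T) (H : rel (T * bool)) (x : T) :
  subrel H (prism e) -> deg H (x, true) = deg (top_copy H) x + H (x, true) (x, false).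
Proof.
move=> He; rewrite /deg.
have -> : [set q | H (x, true) q] =
          [set q | H (x, true) q && q.2] :|: [set q | H (x, true) q && ~~ q.2].
  by apply/setP => q; rewrite !inE -andb_orr orbN andbT.
rewrite card_setU_disjoint; last first.
  by apply/pred0P => q /=; rewrite !inE andbACA andbN andbF.
rewrite (@card_side _ _ true) ?(@card_side _ _ false); last 2 first.
- by move=> q /andP[_ /negbTE].
- by move=> q /andP[_ ->].
congr (_ + _); first by apply: eq_card => y; rewrite !inE andbT.
have bottom_x y : H (x, true) (y, false) -> y = x.
  by move/He; rewrite /prism /=; case: eqVneq.
case Hxx: (H (x, true) (x, false)) => /=.
  rewrite -(cards1 x); apply: eq_card => y; rewrite !inE andbT.
  by apply/idP/eqP => [/bottom_x|->].
apply: eq_card0 => y; rewrite !inE andbT; apply: contraFF Hxx => Hy.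
by rewrite -{2}(bottom_x _ Hy).
Qed.

End Prism.

Unset Implicit Arguments.

Theorem lemma2p3 (k d : nat) (T : finType) (e : rel T) :
  ~~ odd k -> k <= d -> simple_graph e -> regular e d ->
  exists e' : rel T, spanning_subgraph e' e /\
    forall x : T, deg e' x = k \/ (deg e' x).+1 = k.
Proof.
move=> k_even le_kd e_simple e_reg.
have k_double : k = (k./2).*2 by rewrite -{1}(odd_double_half k) (negbTE k_even).
have d_split := odd_double_half d.
case: (boolP (odd d)) => [d_odd|d_even]; rewrite ?d_odd ?(negbTE d_even) in d_split.
- have prism_reg : regular (prism e) (d./2).+1.*2.
    by move=> p; rewrite (prism_regular e_simple e_reg); lia.
  have jr : k./2 <= (d./2).+1 by lia.
  have [H [H_span H_reg]] := petersen (prism_simple e_simple) prism_reg jr.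
  exists (top_copy H); split; first exact: top_copy_spanning.
  by move=> x; have := deg_prism_top x (proj2 H_span); rewrite H_reg -k_double; lia.
- have e_reg2 : regular e (d./2).*2 by move=> x; rewrite e_reg; lia.
  have jr : k./2 <= d./2 by lia.
  have [H [H_span H_reg]] := petersen e_simple e_reg2 jr.
  by exists H; split=> // x; left; rewrite H_reg -k_double.
Qed.
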